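(* Let $x,y$ satisfy $x+y=u_3+u_4$ and $xy=u_1u_2$. Then for every $n\ge0$, $$P_n(u_1,u_2,u_3,u_4\mid\alpha,\beta)=\sum_{k=0}^n\binom nk A_k\Bigl(x,y\,\Big|\,\frac{\alpha+\beta}{2},\frac{\alpha+\beta}{2}\Bigr)\frac{(\beta-\alpha)^{n-k}(u_3-u_4)^{n-k}}{2^{n-k}}.$$
   Context: For $\sigma=\sigma_1\cdots\sigma_m\in\mathfrak S_m$: ${\rm asc}(\sigma)$, ${\rm des}(\sigma)$ are the numbers of $i\in[m-1]$ with $\sigma_i<\sigma_{i+1}$, resp. $\sigma_i>\sigma_{i+1}$; ${\rm LRmax}(\sigma)$ is the number of $i$ with $\sigma_j<\sigma_i$ for all $j<i$; ${\rm RLmax}(\sigma)$ is the number of $i$ with $\sigma_j<\sigma_i$ for all $j>i$. With the convention $\sigma_0=\sigma_{m+1}=0$: ${\rm W}(\sigma)$ is the number of $i\in[m]$ with $\sigma_{i-1}<\sigma_i>\sigma_{i+1}$; ${\rm V}(\sigma)$ is the number of $i$ with $1<i<m$ and $\sigma_{i-1}>\sigma_i<\sigma_{i+1}$; ${\rm rdd}(\sigma)$ is the number of $i$ with $1<i\le m$ and $\sigma_{i-1}>\sigma_i>\sigma_{i+1}$; ${\rm lda}(\sigma)$ is the number of $i$ with $1\le i<m$ and $\sigma_{i-1}<\sigma_i<\sigma_{i+1}$. Define $$P_n(u_1,u_2,u_3,u_4\mid\alpha,\beta)=\sum_{\sigma\in\mathfrak S_{n+1}}u_1^{{\rm V}(\sigma)}u_2^{{\rm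 W}(\sigma)-1}u_3^{{\rm rdd}(\sigma)}u_4^{{\rm lda}(\sigma)}\alpha^{{\rm LRmax}(\sigma)-1}\beta^{{\rm RLmax}(\sigma)-1},$$ and the $(\alpha,\beta)$-Eulerian polynomials $A_n(x,y\mid\alpha,\beta)=\sum_{\sigma\in\mathfrak S_{n+1}}x^{{\rm asc}(\sigma)}y^{{\rm des}(\sigma)}\alpha^{{\rm LRmax}(\sigma)-1}\beta^{{\rm RLmax}(\sigma)-1}$ for $n\ge0$ (so $A_0=1$). Here $A_k(x,y\mid\gamma,\gamma)$ is symmetric in $x,y$. *)

From HB Require Import structures.
From mathcomp Require Import all_boot all_order all_algebra all_fingroup.
Set Implicit Arguments. Unset Strict Implicit. Unset Printing Implicit Defensive.
Import GRing.Theory.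

(* A permutation sigma of [m] is encoded by its word sigma_1 ... sigma_m with
   values in {1,...,m}.  [pget s i] is sigma_i for 1 <= i <= m, with the
   convention sigma_0 = sigma_{m+1} = 0. *)
Definition pword (m : nat) (s : 'S_m) : seq nat :=
  [seq (val (s i)).+1 | i <- enum 'I_m].

Definition pget (w : seq nat) (i : nat) : nat := nth 0 (0 :: w ++ [:: 0]) i.

Section Stats.
Variable w : seq nat.
Local Notation m := (size w).
Local Notation g := (pget w).

Definition asc_w := count (fun i => g i < g i.+1) (iota 1 m.-1).
Definition des_w := count (fun i => g i > g i.+1) (iota 1 m.-1).
Definition LRmax_w :=
  count (fun i => all (fun j => g j < g i) (iota 1 i.-1)) (iota 1 m).
Definition RLmax_w :=
  count (fun i => all (fun j => g j < g i) (iota i.+1 (m - i))) (iota 1 m).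
Definition W_w := count (fun i => (g i.-1 < g i) && (g i > g i.+1)) (iota 1 m).
Definition V_w :=
  count (fun i => (g i.-1 > g i) && (g i < g i.+1)) (iota 2 (m - 2)).
Definition rdd_w :=
  count (fun i => (g i.-1 > g i) && (g i > g i.+1)) (iota 2 m.-1).
Definition lda_w :=
  count (fun i => (g i.-1 < g i) && (g i < g i.+1)) (iota 1 m.-1).
End Stats.

Definition asc m (s : 'S_m) := asc_w (pword s).
Definition des m (s : 'S_m) := des_w (pword s).
Definition LRmax m (s : 'S_m) := LRmax_w (pword s).
Definition RLmax m (s : 'S_m) := RLmax_w (pword s).
Definition Wst m (s : 'S_m) := W_w (pword s).
Definition Vst m (s : 'S_m) := V_w (pword s).
Definition rdd m (s : 'S_m) := rdd_w (pword s).
Definition lda m (s : 'S_m) := lda_w (pword s).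

Local Open Scope ring_scope.

Definition Ppoly (R : comRingType) (n : nat) (u1 u2 u3 u4 a b : R) : R :=
  \sum_(s : 'S_(n.+1))
    u1 ^+ Vst s * u2 ^+ (Wst s - 1) * u3 ^+ rdd s * u4 ^+ lda s
    * a ^+ (LRmax s - 1) * b ^+ (RLmax s - 1).

Definition Apoly (R : comRingType) (n : nat) (x y a b : R) : R :=
  \sum_(s : 'S_(n.+1))
    x ^+ asc s * y ^+ des s * a ^+ (LRmax s - 1) * b ^+ (RLmax s - 1).

From mathcomp Require Import all_boot all_order all_algebra all_fingroup.
From mathcomp Require Import zify ring.
Import GRing.Theory.
Set Implicit Arguments. Unset Strict Implicit. Unset Printing Implicit Defensive.

(* Frame the up-down word of sigma with the conventions sigma_0 = sigma_(m+1) = 0: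
   the two bits around a position tell whether it is a valley, a peak, a double
   descent or a double ascent, so the summand of P_n is a product of letter
   weights, and the summand of A_k(x, y | c, c) a product of x's (ascents) and
   y's (descents).  Every permutation of [n+2] arises exactly once by inserting
   the value 1 into a permutation of [n+1]: in front (a new left-to-right maximum,
   factor alpha), at the end (a new right-to-left maximum, factor beta), or in an
   interior gap, which replaces one bit of the word by a descent-ascent pair.
   Hence both families satisfy S_(n+1) = (linear factor) S_n + D S_n for the
   derivation D x = D y = D u3 = D u4 = x y of a context-free grammar.  Since
   x + y = u3 + u4, the base e = alpha u4 + beta u3 - c (u3 + u4), with
   c = (alpha + beta)/2, is a D-constant and alpha u4 + beta u3 = c (x + y) + e,
   so P_n = sum_k C(n, k) A_k e^(n-k) follows by induction on n.  To apply the
   induction hypothesis to D P_n, D is realised as the linear coefficient of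
   first-order jets v + (x y) 'X.  Finally e = (beta - alpha)(u3 - u4)/2. *)

(** * Leibniz derivatives and words of bits *)

Section ProdDeriv.
Local Open Scope ring_scope.
Variables (R : comNzRingType) (T : Type).

(* The derivative of [\prod_(q <- l) v q] for a derivation sending [v q] to [d q]. *)
Fixpoint prod_deriv (v d : T -> R) (l : seq T) : R :=
  if l is q :: l' then d q * \prod_(r <- l') v r + v q * prod_deriv v d l' else 0.

Lemma eq_prod_deriv v1 v2 d1 d2 l :
  v1 =1 v2 -> d1 =1 d2 -> prod_deriv v1 d1 l = prod_deriv v2 d2 l.
Proof.
move=> vE dE; elim: l => //= q l ->; rewrite vE dE; congr (_ * _ + _).
by apply: eq_bigr => ? _; exact: vE.
Qed.

Lemma coef1M (p q : {poly R}) : (p * q)`_1 = p`_0 * q`_1 + p`_1 * q`_0.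
Proof. by rewrite coefM big_ord_recr big_ord_recr big_ord0 /= add0r. Qed.

Lemma coef1_prod (F : T -> {poly R}) l :
  (\prod_(q <- l) F q)`_1 = prod_deriv (fun q => (F q)`_0) (fun q => (F q)`_1) l.
Proof.
elim: l => [|q l IH]; first by rewrite big_nil coef1.
by rewrite big_cons coef1M IH coef0_prod addrC.
Qed.
End ProdDeriv.

Definition pairs (T : Type) (l : seq T) := zip l (behead l).

(* Adds the boundary bits sigma_0 = 0 < sigma_1 and sigma_m > sigma_(m+1) = 0. *)
Definition frame (w : seq bool) := true :: rcons w false.

Definition insert_valley (i : nat) (l : seq bool) :=
  take i l ++ false :: true :: drop i.+1 l.

Lemma frame_inj : injective frame.
Proof. by move=> w1 w2 [] /rcons_inj []. Qed.

Lemma count_pairs_peak_valley b l :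
  count (pred1 (true, false)) (pairs (b :: l)) + last b l
  = count (pred1 (false, true)) (pairs (b :: l)) + b.
Proof.
elim: l b => [|c l IH] b; first by case: b.
rewrite [pairs _]/= /= -addnA IH.
by case: b; case: c; rewrite /= ?add0n ?addn0 ?add1n ?addn1.
Qed.

Lemma count_pairs_frame w :
  count (pred1 (true, false)) (pairs (frame w))
  = (count (pred1 (false, true)) (pairs (frame w))).+1.
Proof.
have := count_pairs_peak_valley true (rcons w false).
by rewrite last_rcons addn0 addn1.
Qed.

Section PairWeight.
Local Open Scope ring_scope.
Variables (R : comNzRingType) (var : bool * bool -> R).

Definition pair_weight l := \prod_(q <- pairs l) var q.

Lemma pair_weight_cons2 b1 b2 l :
  pair_weight [:: b1, b2 & l] = var (b1, b2) * pair_weight (b2 :: l).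
Proof. by rewrite /pair_weight /= big_cons. Qed.

Lemma pair_weight_rcons b l c :
  pair_weight (rcons (b :: l) c) = pair_weight (b :: l) * var (last b l, c).
Proof.
rewrite /pair_weight.
elim: l b => [|b' l IH] b /=; first by rewrite !big_cons !big_nil mulr1 mul1r.
by rewrite !big_cons IH mulrA.
Qed.

Lemma pair_weight_frame_cons w :
  pair_weight (frame (true :: w)) = var (true, true) * pair_weight (frame w).
Proof. exact: pair_weight_cons2. Qed.

Lemma pair_weight_frame_rcons w :
  pair_weight (frame (rcons w false)) = pair_weight (frame w) * var (false, false).
Proof. by rewrite /frame -rcons_cons pair_weight_rcons last_rcons. Qed.

(* Replacing a bit of a word by [false; true] splits one of its two adjacent
   pairs into three: a bit [true] is charged to the pair on its left, a bit
   [false] to the pair on its right. *)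
Definition pair_deriv (q : bool * bool) : R :=
  (if ~~ q.1 then var (false, true) * var (true, q.2) else 0) +
  (if q.2 then var (q.1, false) * var (false, true) else 0).

(* Generalised to any first bit for the induction: a leading [false] also
   charges the insertion in front of the word to the first pair. *)
Lemma sum_pair_weight_insert b w :
  \sum_(i < size w) pair_weight (b :: rcons (insert_valley i w) false)
  + (if b then 0 else pair_weight [:: false, true & rcons w false])
  = prod_deriv var pair_deriv (pairs (b :: rcons w false)).
Proof.
elim: w b => [|c w IH] b.
  by rewrite big_ord0 /= big_nil !pair_weight_cons2 /pair_weight /= big_nil;
     case: b; rewrite /pair_deriv /=; ring.
rewrite big_ord_recl.
under eq_bigr => i _ do rewrite [insert_valley _ _]/= pair_weight_cons2.
rewrite -big_distrr -[pairs (b :: _)]/((b, c) :: pairs (c :: rcons w false)).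
rewrite [prod_deriv _ _ _]/= -(IH c) -/(pair_weight (c :: rcons w false)).
set S := \sum_(i < size w) _; clearbody S.
rewrite /insert_valley /= drop0 !pair_weight_cons2.
by case: b; case: c; rewrite /pair_deriv /=; ring.
Qed.

Lemma sum_pair_weight_frame w :
  \sum_(i < size w) pair_weight (frame (insert_valley i w))
  = prod_deriv var pair_deriv (pairs (frame w)).
Proof. by rewrite -sum_pair_weight_insert addr0. Qed.
End PairWeight.

Lemma sum_prod_insert_valley (R : comNzRingType) (v : bool -> R) w :
  (\sum_(i < size w) \prod_(t <- insert_valley i w) v t
  = prod_deriv v (fun _ => v false * v true) w)%R.
Proof.
elim: w => [|b w IH]; first by rewrite big_ord0.
rewrite /= big_ord_recl /insert_valley /= !big_cons -IH big_distrr /= mulrA drop0.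
by congr (_ + _)%R; apply: eq_bigr => i _; rewrite big_cons.
Qed.

(** * The up-down word of a permutation *)

Section PermWord.
Variables (m : nat) (s : 'S_m).
Local Notation h := (pget (pword s)).

Lemma size_pword : size (pword s) = m.
Proof. by rewrite size_map size_enum_ord. Qed.

Lemma pget_pword (k : 'I_m) : h k.+1 = (s k).+1.
Proof.
rewrite /pget /= nth_cat size_pword ltn_ord (nth_map k) ?size_enum_ord //.
by rewrite nth_ord_enum.
Qed.

Lemma pget_pword_out i : m < i -> h i = 0.
Proof.
case: i => // i; rewrite ltnS => Hi.
rewrite /pget /= nth_cat size_pword ltnNge Hi /=.
by case: (i - m) => [|[]].
Qed.

Lemma pget_pword_gt0 i : 0 < i <= m -> 0 < h i.
Proof. by case: i => // i /= Hi; rewrite (pget_pword (Ordinal Hi)). Qed.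

Lemma pget_pword_inj i j : 0 < i <= m -> 0 < j <= m -> h i = h j -> i = j.
Proof.
case: i => // i; case: j => // j /= Hi Hj.
rewrite (pget_pword (Ordinal Hi)) (pget_pword (Ordinal Hj)) => [[]] /val_inj.
by move/perm_inj => [->].
Qed.

Lemma pget_pword_neqS i : 0 < m -> i <= m -> h i != h i.+1.
Proof.
move=> Hm Hi; case: i Hi => [|i] Hi.
  by rewrite eq_sym -lt0n; apply: pget_pword_gt0; lia.
case: (ltnP i.+1 m) => H.
  by apply/eqP => /pget_pword_inj; lia.
have -> : i.+1 = m by lia.
by rewrite (pget_pword_out (leqnn _)) -lt0n; apply: pget_pword_gt0; lia.
Qed.
End PermWord.

Definition asc_at m (s : 'S_m) i := pget (pword s) i < pget (pword s) i.+1.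

Definition updown m (s : 'S_m) := [seq asc_at s i | i <- iota 1 m.-1].

Lemma size_updown m (s : 'S_m) : size (updown s) = m.-1.
Proof. by rewrite size_map size_iota. Qed.

Lemma pairs_map_iota (T : Type) (f : nat -> T) k n :
  pairs [seq f i | i <- iota k n.+1] = [seq (f i, f i.+1) | i <- iota k n].
Proof. by elim: n k => [|n IH] k //=; rewrite -IH. Qed.

Lemma count_iota_shift (P : pred nat) a n :
  count P (iota a.+1 n) = count (fun i => P i.+1) (iota a n).
Proof. by rewrite -addn1 addnC iotaDl count_map. Qed.

Lemma count_iota_dropl (P : pred nat) a n :
  P a = false -> count P (iota a.+1 n.-1) = count P (iota a n).
Proof. by case: n => // n /= ->. Qed.

Lemma count_iota_dropr (P : pred nat) a n :
  P (a + n.-1) = false -> count P (iota a n.-1) = count P (iota a n).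
Proof.
by case: n => // n; rewrite succnK => Pn; rewrite -[n.+1]addn1 iotaD count_cat /= Pn !addn0.
Qed.

Section UpDownStats.
Variables (m : nat) (s : 'S_m).
Hypothesis m_gt0 : 0 < m.
Local Notation h := (pget (pword s)).

Lemma asc_at_iota : [seq asc_at s i | i <- iota 0 m.+1] = frame (updown s).
Proof.
have -> : iota 0 m.+1 = 0 :: rcons (iota 1 m.-1) m.
  by case: m m_gt0 => // n _; rewrite -addn1 iotaD cats1.
by rewrite /= map_rcons /asc_at pget_pword_gt0 ?(pget_pword_out s (ltnSn m)) ?ltn0.
Qed.

Lemma count_pairs_updown q : count (pred1 q) (pairs (frame (updown s))) =
  count (fun i => (h i.-1 < h i, h i < h i.+1) == q) (iota 1 m).
Proof. by rewrite -asc_at_iota pairs_map_iota count_map count_iota_shift. Qed.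

Lemma gtn_pget_pword i : i <= m -> (h i.+1 < h i) = ~~ (h i < h i.+1).
Proof. by move=> Hi; have := pget_pword_neqS s m_gt0 Hi; case: ltngtP. Qed.

Lemma gtn_pget_pword_pred i : 0 < i <= m -> (h i < h i.-1) = ~~ (h i.-1 < h i).
Proof. by case: i => // i /andP [_ Hi]; apply: gtn_pget_pword; lia. Qed.

Ltac pair_count :=
  apply: eq_in_count => i; rewrite mem_iota add1n ltnS => /andP [? ?];
  rewrite /= xpair_eqE ?gtn_pget_pword ?gtn_pget_pword_pred;
  first [lia | by case: (_ < _); case: (_ < _)].

Lemma Wst_updown : Wst s = count (pred1 (true, false)) (pairs (frame (updown s))).
Proof. by rewrite count_pairs_updown /Wst /W_w size_pword; pair_count. Qed.

Lemma Vst_updown : Vst s = count (pred1 (false, true)) (pairs (frame (updown s))).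
Proof.
rewrite count_pairs_updown /Vst /V_w size_pword (_ : m - 2 = m.-1.-1); last by lia.
rewrite count_iota_dropl ?count_iota_dropr; first by pair_count.
  by rewrite add1n prednK // (pget_pword_out s (ltnSn m)) ltn0 andbF.
by rewrite ltn0.
Qed.

Lemma rdd_updown : rdd s = count (pred1 (false, false)) (pairs (frame (updown s))).
Proof.
by rewrite count_pairs_updown /rdd /rdd_w size_pword count_iota_dropl ?ltn0 //; pair_count.
Qed.

Lemma lda_updown : lda s = count (pred1 (true, true)) (pairs (frame (updown s))).
Proof.
rewrite count_pairs_updown /lda /lda_w size_pword count_iota_dropr; first by pair_count.
by rewrite add1n prednK // (pget_pword_out s (ltnSn m)) ltn0 andbF.
Qed.

Lemma Wst_Vst : Wst s = (Vst s).+1.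
Proof. by rewrite Wst_updown Vst_updown count_pairs_frame. Qed.

Lemma asc_updown : asc s = count id (updown s).
Proof. by rewrite count_map /asc /asc_w size_pword. Qed.

Lemma des_updown : des s = count negb (updown s).
Proof.
rewrite count_map /des /des_w size_pword; apply: eq_in_count => i.
by rewrite mem_iota add1n => /andP [_ Hi] /=; rewrite /asc_at gtn_pget_pword //; lia.
Qed.

End UpDownStats.

(** * Inserting a new minimum *)

Section InsertMin.
Variables (m : nat) (t : 'S_m) (g : 'I_m.+1).
Local Notation s := (lift_perm g ord0 t).
Local Notation hT := (pget (pword t)).
Local Notation hS := (pget (pword s)).

Lemma pget_lift_perm_at : hS g.+1 = 1.
Proof. by rewrite (pget_pword s g) lift_perm_id. Qed.

Lemma pget_lift_perm_bump (k : 'I_m) : hS (bump g k).+1 = (hT k.+1).+1.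
Proof.
by have := pget_pword s (lift g k); rewrite lift_perm_lift /= => ->; rewrite pget_pword.
Qed.

Lemma pget_lift_perm_lo i : 0 < i <= g -> hS i = (hT i).+1.
Proof.
case: i => // i /= Hi; have Hk : i < m by have := ltn_ord g; lia.
by have := pget_lift_perm_bump (Ordinal Hk); rewrite /bump /= leqNgt Hi.
Qed.

Lemma pget_lift_perm_hi i : g.+1 < i <= m.+1 -> hS i = (hT i.-1).+1.
Proof.
case: i => [|[|i]] //= Hi; have Hk : i < m by lia.
have := pget_lift_perm_bump (Ordinal Hk); rewrite /bump /= (_ : g <= i) //; lia.
Qed.

Hypothesis m_gt0 : 0 < m.

Lemma asc_at_lift_perm_lo i : i < g -> asc_at s i = asc_at t i.
Proof.
rewrite /asc_at; case: i => [|i] Hi.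
  by rewrite (pget_lift_perm_lo (i := 1)) ?ltnS ?pget_pword_gt0 //; lia.
by rewrite !pget_lift_perm_lo //; lia.
Qed.

Lemma asc_at_lift_perm_at : asc_at s g = (g == 0 :> nat).
Proof.
rewrite /asc_at pget_lift_perm_at; case E : (nat_of_ord g) => [//|i].
rewrite pget_lift_perm_lo ?E //; lia.
Qed.

Lemma asc_at_lift_perm_succ : asc_at s g.+1 = (g != m :> nat).
Proof.
rewrite /asc_at pget_lift_perm_at; case: (ltnP g m) => Hg.
  rewrite pget_lift_perm_hi /= ?ltnS ?pget_pword_gt0 ?neq_ltn ?Hg //; lia.
have -> : nat_of_ord g = m by have := ltn_ord g; lia.
by rewrite (pget_pword_out s (ltnSn m.+1)) eqxx.
Qed.

Lemma asc_at_lift_perm_hi i : g.+1 < i <= m.+1 -> asc_at s i = asc_at t i.-1.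
Proof.
move=> Hi; rewrite /asc_at pget_lift_perm_hi //; case: (ltnP i m.+1) => Hi2.
  by rewrite pget_lift_perm_hi ?ltnS //=; [case: i Hi Hi2 | lia].
have -> : i = m.+1 by lia.
by rewrite (pget_pword_out s (ltnSn m.+1)) (pget_pword_out t (ltnSn m)).
Qed.

Lemma frame_updown_lift_perm :
  frame (updown s) =
  take g (frame (updown t)) ++ (g == 0 :> nat) :: (g != m :> nat)
    :: drop g.+1 (frame (updown t)).
Proof.
have Hg := ltn_ord g.
rewrite -!asc_at_iota // -map_take -map_drop take_iota drop_iota.
rewrite (_ : minn g m.+1 = g); last by lia.
rewrite (_ : m.+2 = g + (m - g).+2); last by lia.
rewrite iotaD map_cat add0n; congr (_ ++ _).
  by apply/eq_in_map => i; rewrite mem_iota => /andP [_ Hi]; apply: asc_at_lift_perm_lo.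
rewrite /= -asc_at_lift_perm_at -asc_at_lift_perm_succ; congr [:: _, _ & _].
rewrite add0n (iotaDl 1) -map_comp (_ : m.+1 - g.+1 = m - g); last by lia.
apply/eq_in_map => i; rewrite mem_iota => /andP [Hi1 Hi2] /=.
by rewrite asc_at_lift_perm_hi //; lia.
Qed.

Lemma updown_lift_perm0 : g = 0 :> nat -> updown s = true :: updown t.
Proof.
by move=> g0; apply: frame_inj; rewrite frame_updown_lift_perm g0 (ltn_eqF m_gt0) /= drop0.
Qed.

Lemma updown_lift_permN : g = m :> nat -> updown s = rcons (updown t) false.
Proof.
move=> gm; apply: frame_inj; rewrite frame_updown_lift_perm.
move: (nat_of_ord g) gm (size_updown t) => _ -> /(congr1 S); rewrite prednK //.
rewrite (gtn_eqF m_gt0) eqxx; move: (updown t) => w <-.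
rewrite drop_oversize /=; last by rewrite size_rcons.
by rewrite -[rcons w false]cats1 take_size_cat // /frame -!cats1 -catA.
Qed.

Lemma updown_lift_perm_inner :
  0 < g < m -> updown s = insert_valley g.-1 (updown t).
Proof.
move=> /andP [g_gt0 g_ltm]; apply: frame_inj; rewrite frame_updown_lift_perm.
rewrite (gtn_eqF g_gt0) (ltn_eqF g_ltm) -(prednK g_gt0) /=.
move: (nat_of_ord g) g_gt0 g_ltm (size_updown t) => k k_gt0 k_ltm.
move: (updown t) => w szw; have k_le : k <= size w by lia.
rewrite prednK // drop_rcons // -cats1 takel_cat ?(leq_trans (leq_pred k)) //.
by rewrite /frame /insert_valley prednK // rcons_cat.
Qed.
End InsertMin.

Definition records (r : rel nat) (h : nat -> nat) (I : seq nat) :=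
  count (fun i => all (fun j => r j i ==> (h j < h i)) I) I.

Lemma filter_iota_gtn a n i : a <= i < a + n ->
  [seq j <- iota a n | i < j] = iota i.+1 (a + n - i.+1).
Proof.
move=> /andP [ai ian]; rewrite {1}(_ : n = (i - a).+1 + (n - (i - a).+1)); last by lia.
rewrite iotaD filter_cat (@eq_in_filter _ _ pred0) => [|j]; last by rewrite mem_iota /=; lia.
rewrite filter_pred0 (@eq_in_filter _ _ predT) => [|j]; last by rewrite mem_iota /=; lia.
by rewrite filter_predT; congr iota; lia.
Qed.

Lemma LRmax_w_records w : LRmax_w w = records (fun j i => j < i) (pget w) (iota 1 (size w)).
Proof.
apply: eq_in_count => i; rewrite mem_iota => /andP [i_gt0 i_le].
have -> : iota 1 i.-1 = [seq j <- iota 1 (size w) | j < i].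
  by rewrite -(@filter_iota_ltn 1 (size w) i.-1) ?add1n ?prednK //; lia.
by rewrite all_filter.
Qed.

Lemma RLmax_w_records w : RLmax_w w = records (fun j i => i < j) (pget w) (iota 1 (size w)).
Proof.
apply: eq_in_count => i; rewrite mem_iota => /andP [i_gt0 i_le].
have -> : iota i.+1 (size w - i) = [seq j <- iota 1 (size w) | i < j].
  by rewrite filter_iota_gtn ?add1n ?subSS //; lia.
by rewrite all_filter.
Qed.

Lemma records_insert_min (r : rel nat) (hS hT b : nat -> nat) p I :
  r p p = false -> {in I &, forall k j, r (b k) (b j) = r k j} ->
  hS p = 1 -> {in I, forall j, hS (b j) = (hT j).+1} -> {in I, forall j, 0 < hT j} ->
  records r hS (p :: map b I) = records r hT I + all (fun k => ~~ r (b k) p) I.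
Proof.
move=> rpp rb hSp hSb hT_gt0; rewrite /records /= rpp hSp all_map addnC count_map.
congr (_ + _).
  apply: eq_in_count => j jI /=; rewrite hSb // ltnS (hT_gt0 j jI) implybT all_map.
  by apply: eq_in_all => k kI /=; rewrite rb // hSb.
by congr nat_of_bool; apply: eq_in_all => k kI /=; rewrite hSb.
Qed.

Lemma perm_records r h I J : perm_eq I J -> records r h I = records r h J.
Proof.
move=> pIJ; rewrite /records (seq.permP pIJ).
by apply: eq_count => i; apply: perm_all.
Qed.

Lemma ltn_bump2 h i j : (bump h i < bump h j) = (i < j).
Proof. by rewrite !ltnNge leq_bump2. Qed.

Lemma bump_ltn h k : (bump h k < h) = (k < h).
Proof. by rewrite /bump; case: leqP => hk; lia. Qed.

Lemma ltn_bump h k : (h < bump h k) = (h <= k).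
Proof. by rewrite /bump; case: leqP => hk; lia. Qed.

Section InsertMinRecords.
Variables (m : nat) (t : 'S_m) (g : 'I_m.+1).
Local Notation s := (lift_perm g ord0 t).

Lemma perm_iota_bump :
  perm_eq (iota 1 m.+1) (g.+1 :: map (bump g.+1) (iota 1 m)).
Proof.
have g_le : g <= m by rewrite -ltnS.
have lo : map (bump g.+1) (iota 1 g) = iota 1 g.
  rewrite -[RHS]map_id; apply/(eq_in_map (bump g.+1) id) => k.
  by rewrite mem_iota /bump => ?; lia.
have hi : map (bump g.+1) (iota g.+1 (m - g)) = iota g.+2 (m - g).
  rewrite -[g.+2]add1n iotaDl; apply/(eq_in_map (bump g.+1) (addn 1)) => k.
  by rewrite mem_iota /bump => ?; lia.
have -> : iota 1 m = iota 1 g ++ iota g.+1 (m - g) by rewrite -iotaD subnKC.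
have -> : iota 1 m.+1 = iota 1 g ++ [:: g.+1] ++ iota g.+2 (m - g).
  by rewrite -[[:: g.+1] ++ _]/(iota g.+1 (m - g).+1) -iotaD; congr iota; lia.
by rewrite map_cat lo hi perm_catCA.
Qed.

Lemma records_lift_perm (r : rel nat) :
  irreflexive r -> (forall i j, r (bump g.+1 i) (bump g.+1 j) = r i j) ->
  records r (pget (pword s)) (iota 1 m.+1)
  = records r (pget (pword t)) (iota 1 m) + all (fun k => ~~ r (bump g.+1 k) g.+1) (iota 1 m).
Proof.
move=> r_irr r_bump; rewrite (perm_records _ _ perm_iota_bump).
apply: records_insert_min => [|k j _ _|||]; rewrite ?r_bump ?pget_lift_perm_at //.
- move=> j; rewrite mem_iota; case: j => // k /andP [_ k_lt].
  by rewrite bumpS (pget_lift_perm_bump t g (Ordinal (k_lt : k < m))).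
- by move=> j; rewrite mem_iota => /andP [] *; apply: pget_pword_gt0; lia.
Qed.

Lemma LRmax_lift_perm : LRmax s = LRmax t + (g == 0 :> nat).
Proof.
rewrite /LRmax !LRmax_w_records !size_pword records_lift_perm => [|x|i j];
  rewrite ?ltnn ?ltn_bump2 //.
congr (_ + nat_of_bool _); apply/allP/eqP => [no_lt | g0 k]; last first.
  by rewrite mem_iota bump_ltn g0; lia.
have := ltn_ord g; case: (posnP g) => // g_gt0 g_lt.
by have := no_lt 1; rewrite mem_iota bump_ltn; lia.
Qed.

Lemma RLmax_lift_perm : RLmax s = RLmax t + (g == m :> nat).
Proof.
rewrite /RLmax !RLmax_w_records !size_pword records_lift_perm => [|x|i j];
  rewrite ?ltnn ?ltn_bump2 //.
congr (_ + nat_of_bool _); apply/allP/eqP => [no_gt | gm k]; last first.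
  by rewrite mem_iota ltn_bump gm; lia.
have g_le : g <= m by rewrite -ltnS.
case: (ltnP g m) => // g_lt; have := no_gt m; rewrite mem_iota ltn_bump; lia.
Qed.
End InsertMinRecords.

(** * Recurrences for the generating sums *)

Section UnliftPerm.
Variables (m : nat) (g : 'I_m.+1) (s : 'S_m.+1).

Definition unlift_perm_fun (k : 'I_m) : 'I_m := odflt k (unlift (s g) (s (lift g k))).

Lemma lift_unlift_perm_fun k : lift (s g) (unlift_perm_fun k) = s (lift g k).
Proof.
rewrite /unlift_perm_fun; have := neq_lift g k.
by rewrite -(inj_eq (@perm_inj _ s)) => /unlift_some [j -> ->].
Qed.

Lemma unlift_perm_fun_inj : injective unlift_perm_fun.
Proof.
move=> k1 k2 /(congr1 (lift (s g))); rewrite !lift_unlift_perm_fun.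
by move/perm_inj/lift_inj.
Qed.

Definition unlift_perm : 'S_m := perm unlift_perm_fun_inj.

Lemma lift_unlift_perm : s g = ord0 -> lift_perm g ord0 unlift_perm = s.
Proof.
move=> sg0; apply/permP => k; case: (unliftP g k) => [j|] ->.
  by rewrite lift_perm_lift permE -lift_unlift_perm_fun sg0.
by rewrite sg0; apply: lift_perm_id.
Qed.
End UnliftPerm.

Lemma unlift_lift_perm m (g : 'I_m.+1) (t : 'S_m) : unlift_perm g (lift_perm g ord0 t) = t.
Proof.
apply/permP => k; apply: (@lift_inj _ ord0).
by rewrite permE -{1}(lift_perm_id g ord0 t) lift_unlift_perm_fun lift_perm_lift.
Qed.

Lemma sum_perm_lift (R : nmodType) m (F : 'S_m.+1 -> R) :
  (\sum_(s : 'S_m.+1) F s = \sum_(t : 'S_m) \sum_(g < m.+1) F (lift_perm g ord0 t))%R.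
Proof.
rewrite exchange_big /= (partition_big (fun s : 'S_m.+1 => s^-1%g ord0) predT) //=.
apply: eq_bigr => g _; rewrite (reindex (lift_perm g ord0)) /=.
  by apply: eq_bigl => t; rewrite lift_permV lift_perm_id eqxx.
exists (unlift_perm g) => [t _ | s /eqP sg]; first exact: unlift_lift_perm.
by apply: lift_unlift_perm; rewrite -sg permKV.
Qed.

Lemma LRmax_gt0 m (s : 'S_m) : 0 < m -> 0 < LRmax s.
Proof. by move=> m_gt0; rewrite /LRmax /LRmax_w size_pword; case: m s m_gt0. Qed.

Lemma RLmax_gt0 m (s : 'S_m) : 0 < m -> 0 < RLmax s.
Proof.
rewrite /RLmax -{1}(size_pword s); move: (pword s) => w.
rewrite /RLmax_w; case: (size w) => // n _.
by rewrite -[n.+1]addn1 iotaD count_cat /= [1 + n]addnC subnn /= addn0 addn1.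
Qed.

Section UpdownSum.
Local Open Scope ring_scope.
Variable R : comNzRingType.

Definition updown_sum n (F : seq bool -> R) (a b : R) :=
  \sum_(s : 'S_n.+1) F (updown s) * a ^+ (LRmax s - 1) * b ^+ (RLmax s - 1).

Lemma lift_perm_weight m (t : 'S_m) (g : 'I_m.+1) (a b : R) : (0 < m)%N ->
  a ^+ (LRmax (lift_perm g ord0 t) - 1) * b ^+ (RLmax (lift_perm g ord0 t) - 1) =
  a ^+ (g == 0 :> nat) * b ^+ (g == m :> nat) * (a ^+ (LRmax t - 1) * b ^+ (RLmax t - 1)).
Proof.
move=> m_gt0; rewrite LRmax_lift_perm RLmax_lift_perm.
have LR_gt0 := LRmax_gt0 t m_gt0; have RL_gt0 := RLmax_gt0 t m_gt0.
rewrite (_ : (_ + _ - 1 = (g == 0 :> nat) + (LRmax t - 1))%N); last by lia.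
rewrite (_ : (_ + _ - 1 = (g == m :> nat) + (RLmax t - 1))%N); last by lia.
by rewrite !exprD; ring.
Qed.

Lemma updown_sum_succ n F a b :
  updown_sum n.+1 F a b = updown_sum n (fun w =>
    a * F (true :: w) + b * F (rcons w false) + \sum_(i < size w) F (insert_valley i w)) a b.
Proof.
rewrite /updown_sum sum_perm_lift; apply: eq_bigr => t _.
under eq_bigr => g _ do rewrite -mulrA lift_perm_weight // mulrA.
rewrite -big_distrl -mulrA /= size_updown /=; congr (_ * _).
rewrite big_ord_recl big_ord_recr /= updown_lift_perm0 ?updown_lift_permN //.
under eq_bigr => i _ do rewrite updown_lift_perm_inner /= ?ltnS ?ltn_ord //.
under eq_bigr => i _ do
  rewrite add0n /bump leq0n add1n eqSS (ltn_eqF (ltn_ord i)) !expr0 !mulr1.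
rewrite /bump leq0n add1n eqxx !expr0 !expr1 !mul1r !mulr1.
by ring.
Qed.
End UpdownSum.

Local Open Scope ring_scope.

Section UpdownSumLinear.
Variable R : comNzRingType.

Lemma updown_sum0 (F : seq bool -> R) a b : updown_sum 0 F a b = F [::].
Proof.
rewrite /updown_sum (eq_bigr (fun _ => F [::])) => [|s _].
  by rewrite sumr_const card_Sn.
rewrite /LRmax /RLmax /LRmax_w /RLmax_w size_pword /=.
by rewrite (size0nil (size_updown s)) !mulr1.
Qed.

Lemma updown_sumDZ n (F G : seq bool -> R) c a b :
  updown_sum n (fun w => c * F w + G w) a b
  = c * updown_sum n F a b + updown_sum n G a b.
Proof.
rewrite /updown_sum big_distrr -big_split; apply: eq_bigr => s _ /=; ring.
Qed.

Lemma eq_updown_sum n (F G : seq bool -> R) a b :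
  F =1 G -> updown_sum n F a b = updown_sum n G a b.
Proof. by move=> FG; apply: eq_bigr => s _; rewrite FG. Qed.

Lemma coef_updown_sum n (F : seq bool -> {poly R}) a b i :
  (updown_sum n F a%:P b%:P)`_i = updown_sum n (fun w => (F w)`_i) a b.
Proof.
rewrite /updown_sum coef_sum; apply: eq_bigr => s _.
by rewrite -!polyC_exp -mulrA -polyCM coefMC mulrA.
Qed.
End UpdownSumLinear.

Section PeakValleySums.
Variable R : comNzRingType.

(* The bits around sigma_i: (false, true) is a valley, (true, false) a peak,
   (false, false) a double descent and (true, true) a double ascent. *)
Definition pair_var (p u3 u4 : R) (q : bool * bool) : R :=
  match q with
  | (false, true) => p | (true, false) => 1 | (false, false) => u3 | (true, true) => u4
  end.

Definition bit_var (x y : R) (b : bool) : R := if b then x else y.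

Definition Psum n (p u3 u4 a b : R) :=
  updown_sum n (fun w => pair_weight (pair_var p u3 u4) (frame w)) a b.

Definition Asum n (x y c : R) := updown_sum n (fun w => \prod_(t <- w) bit_var x y t) c c.

Definition dPsum n (p u3 u4 a b : R) :=
  updown_sum n (fun w =>
    prod_deriv (pair_var p u3 u4) (pair_deriv (pair_var p u3 u4)) (pairs (frame w))) a b.

Definition dAsum n (x y c : R) :=
  updown_sum n (fun w => prod_deriv (bit_var x y) (fun _ => x * y) w) c c.

Lemma pair_weight_pair_var p u3 u4 l :
  pair_weight (pair_var p u3 u4) l =
  p ^+ count (pred1 (false, true)) (pairs l) * u3 ^+ count (pred1 (false, false)) (pairs l)
  * u4 ^+ count (pred1 (true, true)) (pairs l).
Proof.
rewrite /pair_weight; elim: (pairs l) => [|q ps IH]; first by rewrite big_nil !expr0 !mulr1.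
by rewrite big_cons IH; case: q => [[] []]; rewrite /= ?add0n ?add1n ?exprS; ring.
Qed.

Lemma prod_bit_var x y w :
  \prod_(t <- w) bit_var x y t = x ^+ count id w * y ^+ count negb w.
Proof.
elim: w => [|t w IH]; first by rewrite big_nil !expr0 mulr1.
by rewrite big_cons IH; case: t; rewrite /= ?add0n ?add1n ?exprS; ring.
Qed.

Lemma Ppoly_Psum n (u1 u2 u3 u4 a b : R) :
  Ppoly n u1 u2 u3 u4 a b = Psum n (u1 * u2) u3 u4 a b.
Proof.
apply: eq_bigr => s _; rewrite pair_weight_pair_var.
rewrite -Vst_updown // -rdd_updown // -lda_updown // (Wst_Vst s) // subn1 /= exprMn.
congr (_ * _ * _); ring.
Qed.

Lemma Apoly_Asum n (x y c : R) : Apoly n x y c c = Asum n x y c.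
Proof.
by apply: eq_bigr => s _; rewrite prod_bit_var -asc_updown // -des_updown.
Qed.

Lemma Psum_succ n p u3 u4 a b :
  Psum n.+1 p u3 u4 a b = (a * u4 + b * u3) * Psum n p u3 u4 a b + dPsum n p u3 u4 a b.
Proof.
rewrite /Psum updown_sum_succ -updown_sumDZ; apply: eq_updown_sum => w.
by rewrite sum_pair_weight_frame pair_weight_frame_cons pair_weight_frame_rcons /=; ring.
Qed.

Lemma Asum_succ n x y c :
  Asum n.+1 x y c = c * (x + y) * Asum n x y c + dAsum n x y c.
Proof.
rewrite /Asum updown_sum_succ -updown_sumDZ; apply: eq_updown_sum => w.
rewrite sum_prod_insert_valley (@eq_prod_deriv _ _ _ (bit_var x y) _ (fun _ => x * y)) //.
  by rewrite -cats1 big_cat !big_cons !big_nil /=; ring.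
by move=> _; rewrite mulrC.
Qed.
End PeakValleySums.

(** * The binomial expansion *)

Section Jet.
Variable R : comNzRingType.

(* In a polynomial expression of first-order jets [c + d 'X], the coefficient of
   ['X] is the derivative of the expression along [c |-> d]. *)
Definition jet (c d : R) : {poly R} := c%:P + 'X * d%:P.

Lemma coef0_jet c d : (jet c d)`_0 = c.
Proof. by rewrite coefD coefC coefXM /= addr0. Qed.

Lemma coef1_jet c d : (jet c d)`_1 = d.
Proof. by rewrite coefD coefC coefXM /= add0r coefC. Qed.

Variables (x y u3 u4 : R).
Hypothesis xy_u3u4 : x + y = u3 + u4.
Local Notation p := (x * y).
Local Notation pair_var_jet := (pair_var (jet x p * jet y p) (jet u3 p) (jet u4 p)).

(* The valley weight [x y] gets the derivative [x y (x + y) = x y (u3 + u4)]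
   required by [pair_deriv]. *)
Lemma coef_pair_var_jet q :
  (pair_var_jet q)`_0 = pair_var p u3 u4 q /\
  (pair_var_jet q)`_1 = pair_deriv (pair_var p u3 u4) q.
Proof.
case: q => [[] []];
  rewrite /pair_var /pair_deriv /= ?coef0M ?coef1M ?coef0_jet ?coef1_jet ?coef1;
  split => //; rewrite ?mulr0 ?mul0r ?addr0 ?add0r ?mulr1 ?mul1r //.
transitivity (p * (x + y)); first by ring.
by rewrite xy_u3u4; ring.
Qed.

Lemma coef1_Psum_jet n (a b : R) :
  (Psum n (jet x p * jet y p) (jet u3 p) (jet u4 p) a%:P b%:P)`_1 = dPsum n p u3 u4 a b.
Proof.
rewrite coef_updown_sum; apply: eq_updown_sum => w.
by rewrite coef1_prod; apply: eq_prod_deriv => q; case: (coef_pair_var_jet q).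
Qed.

Lemma coef1_Asum_jet n (c : R) : (Asum n (jet x p) (jet y p) c%:P)`_1 = dAsum n x y c.
Proof.
rewrite coef_updown_sum; apply: eq_updown_sum => w.
by rewrite coef1_prod; apply: eq_prod_deriv => -[];
  rewrite /bit_var ?coef0_jet ?coef1_jet.
Qed.

Lemma base_jet (a b c : R) : c + c = a + b ->
  a%:P * jet u4 p + b%:P * jet u3 p - c%:P * (jet u3 p + jet u4 p)
  = (a * u4 + b * u3 - c * (u3 + u4))%:P.
Proof.
move=> cab; rewrite /jet polyCB polyCD !polyCM polyCD.
have -> : a%:P = c%:P + c%:P - b%:P :> {poly R} by rewrite -!polyCD -polyCB cab addrK.
ring.
Qed.
End Jet.

Lemma sum_binomial_succ (R : comNzRingType) n (F : nat -> R) (e : R) :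
  \sum_(k < n.+2) 'C(n.+1, k)%:R * F k * e ^+ (n.+1 - k) =
  \sum_(k < n.+1) 'C(n, k)%:R * F k.+1 * e ^+ (n - k)
  + e * \sum_(k < n.+1) 'C(n, k)%:R * F k * e ^+ (n - k).
Proof.
rewrite big_ord_recl; under eq_bigr => k _ do rewrite lift0 binS natrD !mulrDl.
rewrite big_split /= addrA addrC; congr (_ + _).
rewrite big_ord_recr /= (@bin_small n n.+1) // !mul0r addr0.
rewrite [in RHS]big_ord_recl mulrDr; congr (_ + _); first by rewrite !bin0 !subn0 exprS; ring.
rewrite big_distrr /=; apply: eq_bigr => k _; rewrite /bump leq0n add1n subSS.
by rewrite (_ : (n - k = (n - k.+1).+1)%N) ?exprS; [ring | have := ltn_ord k; lia].
Qed.

Lemma Psum_expansion n : forall (R : comNzRingType) (a b c x y u3 u4 : R),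
  c + c = a + b -> x + y = u3 + u4 ->
  Psum n (x * y) u3 u4 a b = \sum_(k < n.+1)
    'C(n, k)%:R * Asum k x y c * (a * u4 + b * u3 - c * (u3 + u4)) ^+ (n - k).
Proof.
elim: n => [|n IH] R a b c x y u3 u4 cab xyu.
  rewrite big_ord1 /Psum /Asum !updown_sum0 /pair_weight /=.
  by rewrite !big_cons !big_nil bin0 expr0 !mulr1.
set e := _ - _.
have dPsum_expansion :
  dPsum n (x * y) u3 u4 a b = \sum_(k < n.+1) 'C(n, k)%:R * dAsum k x y c * e ^+ (n - k).
  have cab' : c%:P + c%:P = a%:P + b%:P :> {poly R} by rewrite -!polyCD cab.
  have xyu' : jet x (x * y) + jet y (x * y) = jet u3 (x * y) + jet u4 (x * y).
    by rewrite /jet addrACA [RHS]addrACA -!polyCD xyu.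
  have := congr1 (coefp 1) (IH _ _ _ _ _ _ _ _ cab' xyu').
  rewrite /= coef1_Psum_jet // base_jet // coef_sum => ->; apply: eq_bigr => k _.
  rewrite -polyC_natr -polyC_exp mulrC mulrA -polyCM coefCM coef1_Asum_jet //; ring.
have Asum_expansion_succ :
  \sum_(k < n.+1) 'C(n, k)%:R * Asum k.+1 x y c * e ^+ (n - k)
  = c * (x + y) * \sum_(k < n.+1) 'C(n, k)%:R * Asum k x y c * e ^+ (n - k)
    + \sum_(k < n.+1) 'C(n, k)%:R * dAsum k x y c * e ^+ (n - k).
  by rewrite big_distrr -big_split; apply: eq_bigr => k _ /=; rewrite Asum_succ; ring.
rewrite Psum_succ (IH _ _ _ _ _ _ _ _ cab xyu) dPsum_expansion.
rewrite (sum_binomial_succ n (fun k => Asum k x y c)) Asum_expansion_succ /e xyu.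
ring.
Qed.

Theorem theorem6p1 (R : fieldType) (H2 : (2%:R : R) != 0)
  (u1 u2 u3 u4 a b x y : R)
  (Hsum : x + y = u3 + u4) (Hprod : x * y = u1 * u2) (n : nat) :
  Ppoly n u1 u2 u3 u4 a b =
  \sum_(0 <= k < n.+1)
    ('C(n, k))%:R * Apoly k x y ((a + b) / 2%:R) ((a + b) / 2%:R)
    * ((b - a) ^+ (n - k) * (u3 - u4) ^+ (n - k) / 2%:R ^+ (n - k)).
Proof.
set c := (a + b) / 2%:R.
have cc_ab : c + c = a + b by rewrite /c; field.
rewrite Ppoly_Psum -Hprod (Psum_expansion n cc_ab Hsum) big_mkord.
apply: eq_bigr => k _; rewrite Apoly_Asum -exprMn -expr_div_n.
by congr (_ * _ ^+ _); rewrite /c; field.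
Qed.
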